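(* For integers $a,b,c,d$ with $1\le c<a$, $0\le d<b$, and $a+b+c+d=n$, let $\lambda_{a,b,c,d} = a\,(c+1)\,2^d\,1^{b-d-1}\in P(n)$ (the partition with parts $a$, $c+1$, then $d$ parts equal to $2$, then $b-d-1$ parts equal to $1$). Then the number of standard Young tableaux of shape $\lambda_{a,b,c,d}$ is $$\chi^{\lambda_{a,b,c,d}}(1^n) = \binom{n}{a,b,c,d}\frac{ac(a-c)(b-d)}{(a+b)(a+d)(b+c)(c+d)},$$ and $$\rho_{\lambda_{a,b,c,d}} = \binom{a}{2}-\binom{b+1}{2}+\binom{c}{2}-\binom{d+1}{2},$$ where $2\rho_\lambda=\sum_i\lambda_i(\lambda_i-2i+1)$.
   Context: $\binom{n}{a,b,c,d} = \frac{n!}{a!\,b!\,c!\,d!}$ is the multinomial coefficient. *)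

From mathcomp Require Import all_boot all_order all_algebra.
Set Implicit Arguments. Unset Strict Implicit. Unset Printing Implicit Defensive.
Import Order.TTheory GRing.Theory Num.Theory.

(* A partition is a (weakly decreasing) sequence of positive parts [lambda_1; lambda_2; ...]. *)

Definition in_diagram (la : seq nat) (x : nat * nat) : bool := x.2 < nth 0 la x.1.

Definition cellT (la : seq nat) : finType := ('I_(size la) * 'I_(head 0 la))%type.

Definition cell_nat (la : seq nat) (x : cellT la) : nat * nat :=
  (nat_of_ord x.1, nat_of_ord x.2).

(* A standard Young tableau of shape la (with |la| = n): cells of the diagram are
   filled injectively with labels in {0,..,n-1} (hence bijectively, as the diagram
   has n cells), strictly increasing along rows and down columns; cells outside the
   diagram carry no label. *)
Definition is_syt (la : seq nat) (n : nat) (T : {ffun cellT la -> option 'I_n}) : bool :=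
  [&& [forall x, in_diagram la (cell_nat x) == isSome (T x)],
      [forall x, forall y, (in_diagram la (cell_nat x) && in_diagram la (cell_nat y)
                            && (T x == T y)) ==> (x == y)],
      [forall x, forall y, (in_diagram la (cell_nat x) && in_diagram la (cell_nat y)
          && (x.1 == y.1 :> nat) && (x.2 < y.2)) ==>
          (match T x, T y with Some u, Some v => u < v | _, _ => false end)] &
      [forall x, forall y, (in_diagram la (cell_nat x) && in_diagram la (cell_nat y)
          && (x.2 == y.2 :> nat) && (x.1 < y.1)) ==>
          (match T x, T y with Some u, Some v => u < v | _, _ => false end)]].

(* Number of standard Young tableaux of shape la (= chi^la(1^n), n = |la|). *)
Definition num_syt (la : seq nat) : nat :=
  #|[set T : {ffun cellT la -> option 'I_(sumn la)} | is_syt T]|.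

Definition lam_abcd (a b c d : nat) : seq nat :=
  [:: a; c.+1] ++ nseq d 2 ++ nseq (b - d - 1) 1.

Local Open Scope ring_scope.

Definition multinom4 (n a b c d : nat) : rat :=
  (n`!)%:R / ((a`!)%:R * (b`!)%:R * (c`!)%:R * (d`!)%:R).

Definition rho (la : seq nat) : rat :=
  (\sum_(i < size la)
     ((nth 0 la i)%:R * ((nth 0 la i)%:R - 2 * (i.+1)%:R + 1) : rat)) / 2.

(* In a standard Young tableau the largest label occupies a corner, and erasing it leaves a
   standard tableau of the shape without that corner, so f^la is the sum of f^mu over the
   shapes mu obtained by removing one corner of la.  The corners of la_{a,b,c,d} end rows
   1, 2, d+2 and b+1, and removing them gives la_{a-1,b,c,d}, la_{a,b,c-1,d} (the hook
   (a,1^b) when c = 1 and d = 0), la_{a,b,c,d-1} and la_{a,b-1,c,d}.  The claimed formula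
   satisfies the same recursion (an identity of rational functions), and the hook count
   C(a+b-1, b) satisfies Pascal's rule; induction on n concludes. *)

From mathcomp Require Import all_boot all_order all_algebra.
From mathcomp Require Import zify ring lra.
From Stdlib Require Import FunctionalExtensionality.
Import Order.TTheory GRing.Theory Num.Theory.
Set Implicit Arguments. Unset Strict Implicit. Unset Printing Implicit Defensive.

Definition in_shape (r : nat -> nat) (x : nat * nat) : bool := x.2 < r x.1.

Definition shape_dec (r : nat -> nat) (i : nat) : nat -> nat :=
  fun k => if k == i then (r i).-1 else r k.

Definition label_lt m (u v : option 'I_m) : bool :=
  match u, v with Some u, Some v => u < v | _, _ => false end.

Lemma sum_ord_eq (V : nmodType) n k (x : V) :
  k < n -> (\sum_(i < n) (if i == k :> nat then x else 0) = x)%R.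
Proof.
move=> k_lt; rewrite (bigD1 (Ordinal k_lt)) //= eqxx big1 ?addr0 // => i.
by rewrite -val_eqE => /negbTE ->.
Qed.

(* Tableaux are counted inside a fixed [R] x [C] grid, the shape being given by its row
   lengths [r], so that removing a corner changes [r] but not the type of tableaux. *)
Section GridTableaux.
Variables R C : nat.
Local Notation cell := ('I_R * 'I_C)%type.

Definition cell_val (x : cell) : nat * nat := (nat_of_ord x.1, nat_of_ord x.2).

Lemma cell_val_inj : injective cell_val.
Proof. by case=> [x1 x2] [y1 y2] [/val_inj -> /val_inj ->]. Qed.

Definition is_syt_grid (r : nat -> nat) m (T : {ffun cell -> option 'I_m}) : bool :=
  [&& [forall x, in_shape r (cell_val x) == isSome (T x)],
      [forall x, forall y, (in_shape r (cell_val x) && in_shape r (cell_val y)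
                            && (T x == T y)) ==> (x == y)],
      [forall x, forall y, (in_shape r (cell_val x) && in_shape r (cell_val y)
          && (x.1 == y.1 :> nat) && (x.2 < y.2)) ==> label_lt (T x) (T y)] &
      [forall x, forall y, (in_shape r (cell_val x) && in_shape r (cell_val y)
          && (x.2 == y.2 :> nat) && (x.1 < y.1)) ==> label_lt (T x) (T y)]].

Definition nsyt_grid (r : nat -> nat) m : nat :=
  #|[set T : {ffun cell -> option 'I_m} | is_syt_grid r T]|.

Definition shape_cells (r : nat -> nat) : {set cell} := [set x | in_shape r (cell_val x)].

Definition is_corner (r : nat -> nat) (i : nat) : bool :=
  (0 < r i) && [forall k : 'I_R, (i < k) ==> (r k < r i)].

Lemma is_syt_gridP r m (T : {ffun cell -> option 'I_m}) :
  reflect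
  [/\ forall x, in_shape r (cell_val x) = isSome (T x),
      {in [pred x | in_shape r (cell_val x)] &, injective T},
      forall x y, in_shape r (cell_val x) -> in_shape r (cell_val y) ->
        x.1 = y.1 :> nat -> x.2 < y.2 -> label_lt (T x) (T y) &
      forall x y, in_shape r (cell_val x) -> in_shape r (cell_val y) ->
        x.2 = y.2 :> nat -> x.1 < y.1 -> label_lt (T x) (T y)]
  (is_syt_grid r T).
Proof.
apply: (iffP and4P) => [[/forallP T_dom /forallP T_inj /forallP T_row /forallP T_col] |
                        [T_dom T_inj T_row T_col]].
  split=> [x | x y hx hy e | x y hx hy e lt | x y hx hy e lt]; first exact: (eqP (T_dom x)).
  - rewrite !inE in hx hy; have /forallP/(_ y) := T_inj x.
    by rewrite hx hy e eqxx => /eqP.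
  - by have /forallP/(_ y) := T_row x; rewrite hx hy e eqxx lt.
  - by have /forallP/(_ y) := T_col x; rewrite hx hy e eqxx lt.
split; apply/forallP => x.
- by rewrite T_dom.
- apply/forallP => y; apply/implyP => /andP[/andP[hx hy] /eqP e].
  by apply/eqP/T_inj.
- apply/forallP => y; apply/implyP => /andP[/andP[/andP[hx hy] /eqP e] lt].
  exact: T_row.
- apply/forallP => y; apply/implyP => /andP[/andP[/andP[hx hy] /eqP e] lt].
  exact: T_col.
Qed.

Lemma label_ltxx m (u : option 'I_m) : label_lt u u = false.
Proof. by case: u => //= u; rewrite ltnn. Qed.

Lemma label_lt_lift m (u v : option 'I_m) :
  label_lt (omap (lift ord_max) u) (omap (lift ord_max) v) = label_lt u v.
Proof. by case: u => [u|]; case: v => [v|] //; cbn -[lift]; rewrite !lift_max. Qed.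

Lemma label_lt_max m (u : 'I_m) : label_lt (Some (lift ord_max u)) (Some ord_max).
Proof. by change (lift ord_max u < @ord_max m); rewrite lift_max. Qed.

Definition max_row m (T : {ffun cell -> option 'I_m.+1}) : nat :=
  if [pick x | T x == Some ord_max] is Some x then nat_of_ord x.1 else R.

Section Shape.
Variable r : nat -> nat.
Hypothesis r_rows : forall i, R <= i -> r i = 0.
Hypothesis r_cols : forall i, r i <= C.

Lemma max_label_exists m (T : {ffun cell -> option 'I_m.+1}) :
  #|shape_cells r| = m.+1 -> is_syt_grid r T -> exists x, T x = Some ord_max.
Proof.
move=> card_r /is_syt_gridP[T_dom T_inj _ _].
case: (pickP (fun x => T x == Some ord_max)) => [x /eqP|T_max]; first by exists x.
pose g x := odflt ord0 (T x).
have g_inj : {in shape_cells r &, injective g}.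
  move=> x y; rewrite !inE /g => hx hy; move: (hx) (hy); rewrite !T_dom.
  case Tx: (T x) => [u|] // _; case Ty: (T y) => [v|] // _ /= uv.
  by apply: T_inj; rewrite ?inE ?Tx ?Ty ?uv.
have : g @: shape_cells r \subset [set~ ord_max].
  apply/subsetP => _ /imsetP[x + ->]; rewrite !inE T_dom /g.
  by case Tx: (T x) => [u|] //= _; apply: contraFN (T_max x) => /eqP <-; rewrite Tx.
by move/subset_leq_card; rewrite card_in_imset // cardsC1 card_ord card_r ltnn.
Qed.

Lemma max_label_corner m (T : {ffun cell -> option 'I_m.+1}) (x : cell) :
  is_syt_grid r T -> T x = Some ord_max -> x.2 = (r x.1).-1 :> nat /\ is_corner r x.1.
Proof.
move=> /is_syt_gridP[T_dom _ T_row T_col] Tx.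
have hx : in_shape r (cell_val x) by rewrite T_dom Tx.
have not_after y : in_shape r (cell_val y) -> ~~ label_lt (T x) (T y).
  by move=> _; rewrite Tx; case: (T y) => // v; rewrite /= ltnNge leq_ord.
move: (hx); rewrite /in_shape /= => x_lt; split.
  apply: anti_leq; apply/andP; split; first by lia.
  rewrite leqNgt; apply/negP => lt.
  have col_lt : (r x.1).-1 < C by have := r_cols x.1; lia.
  have hy : in_shape r (cell_val (x.1, Ordinal col_lt)) by rewrite /in_shape /=; lia.
  by have := not_after _ hy; rewrite T_row.
rewrite /is_corner (leq_ltn_trans _ x_lt) //=; apply/forallP => k; apply/implyP => ik.
rewrite ltnNge; apply/negP => le.
have hy : in_shape r (cell_val (k, x.2)) by rewrite /in_shape /=; lia.
by have := not_after _ hy; rewrite T_col.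
Qed.

Lemma max_rowE m (T : {ffun cell -> option 'I_m.+1}) (x : cell) :
  is_syt_grid r T -> T x = Some ord_max -> max_row T = x.1.
Proof.
move=> /is_syt_gridP[T_dom T_inj _ _] Tx; rewrite /max_row.
case: pickP => [y /eqP Ty|/(_ x)]; last by rewrite Tx eqxx.
by congr (nat_of_ord _.1); apply: T_inj; rewrite ?inE ?T_dom ?Tx ?Ty.
Qed.

Lemma corner_cell_exists i : is_corner r i -> exists cc : cell, cell_val cc = (i, (r i).-1).
Proof.
case/andP=> ri_gt0 _.
have i_lt : i < R by rewrite ltnNge; apply/negP => /r_rows; lia.
have col_lt : (r i).-1 < C by have := r_cols i; lia.
by exists (Ordinal i_lt, Ordinal col_lt).
Qed.

Section Corner.
Variables (i : nat) (cc : cell).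
Hypotheses (i_corner : is_corner r i) (ccE : cell_val cc = (i, (r i).-1)).

Lemma in_shape_dec (x : cell) :
  in_shape (shape_dec r i) (cell_val x) = in_shape r (cell_val x) && (x != cc).
Proof.
have ri_gt0 : 0 < r i by case/andP: i_corner.
have -> : (x != cc) = ~~ ((x.1 == i :> nat) && (x.2 == (r i).-1 :> nat)).
  by case: cc ccE => [c1 c2] [<- <-]; case: x.
rewrite /in_shape /shape_dec /=; case: eqP => [->|_] /=; last by rewrite andbT.
by apply/idP/andP => [|[lt /eqP ne]]; lia.
Qed.

Lemma in_shape_corner : in_shape r (cell_val cc).
Proof. by case/andP: i_corner; rewrite /in_shape ccE /=; lia. Qed.

Definition add_max m (T : {ffun cell -> option 'I_m}) : {ffun cell -> option 'I_m.+1} :=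
  [ffun x => if x == cc then Some ord_max else omap (lift ord_max) (T x)].

(* [unlift ord_max] erases the largest label, which leaves the corner cell empty. *)
Definition del_max m (T : {ffun cell -> option 'I_m.+1}) : {ffun cell -> option 'I_m} :=
  [ffun x => obind (unlift ord_max) (T x)].

Lemma add_max_cc m (T : {ffun cell -> option 'I_m}) : add_max T cc = Some ord_max.
Proof. by rewrite ffunE eqxx. Qed.

Lemma add_max_lift m (T : {ffun cell -> option 'I_m}) x :
  x != cc -> add_max T x = omap (lift ord_max) (T x).
Proof. by move=> x_cc; rewrite ffunE (negbTE x_cc). Qed.

Section AddMax.
Variables (m : nat) (T : {ffun cell -> option 'I_m}).
Hypothesis T_syt : is_syt_grid (shape_dec r i) T.

Lemma syt_dec_corner : T cc = None.
Proof.
case/is_syt_gridP: T_syt => /(_ cc); rewrite in_shape_dec eqxx andbF.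
by case: (T cc).
Qed.

Lemma add_maxK : del_max (add_max T) = T.
Proof.
apply/ffunP => x; rewrite ffunE; have [->|x_cc] := eqVneq x cc.
  by rewrite add_max_cc /= unlift_none syt_dec_corner.
by rewrite add_max_lift //; case: (T x) => //= u; rewrite liftK.
Qed.

Lemma syt_add_max : is_syt_grid r (add_max T).
Proof.
case/is_syt_gridP: T_syt => T_dom T_inj T_row T_col.
have in_dec x : x != cc -> in_shape r (cell_val x) -> in_shape (shape_dec r i) (cell_val x).
  by move=> x_cc hx; rewrite in_shape_dec hx x_cc.
have below_max x : x != cc -> in_shape r (cell_val x) ->
    label_lt (add_max T x) (add_max T cc).
  move=> x_cc /(in_dec _ x_cc); rewrite T_dom add_max_cc add_max_lift //.
  by case: (T x) => // u _; apply: label_lt_max.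
have [ri_gt0 /forallP later_lt] := andP i_corner.
have [cc1 cc2] : cc.1 = i :> nat /\ cc.2 = (r i).-1 :> nat by case: ccE.
apply/is_syt_gridP; split.
- move=> x; have [->|x_cc] := eqVneq x cc; first by rewrite in_shape_corner add_max_cc.
  by rewrite -[LHS]andbT -x_cc -in_shape_dec T_dom add_max_lift //; case: (T x).
- move=> x y; rewrite !inE => hx hy.
  have [-> | x_cc] := eqVneq x cc; have [-> | y_cc] := eqVneq y cc => //.
  + by move: (below_max y y_cc hy) => /[swap] ->; rewrite label_ltxx.
  + by move: (below_max x x_cc hx) => /[swap] ->; rewrite label_ltxx.
  + rewrite !add_max_lift // => /(inj_omap (@lift_inj _ ord_max)).
    by apply: T_inj; rewrite inE in_dec.
- move=> x y hx hy e lt.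
  have [xE | x_cc] := eqVneq x cc; have [yE | y_cc] := eqVneq y cc.
  + by rewrite xE yE ltnn in lt.
  + by move: hy lt; rewrite /in_shape /= -e xE cc1 cc2; lia.
  + by rewrite yE below_max.
  + by rewrite !add_max_lift // label_lt_lift; apply: T_row => //; apply: in_dec.
- move=> x y hx hy e lt.
  have [xE | x_cc] := eqVneq x cc; have [yE | y_cc] := eqVneq y cc.
  + by rewrite xE yE ltnn in lt.
  + have := later_lt y.1; move: hy lt; rewrite /in_shape /= -e xE cc1 cc2; lia.
  + by rewrite yE below_max.
  + by rewrite !add_max_lift // label_lt_lift; apply: T_col => //; apply: in_dec.
Qed.

End AddMax.

Section DelMax.
Variables (m : nat) (T : {ffun cell -> option 'I_m.+1}).
Hypotheses (T_syt : is_syt_grid r T) (T_cc : T cc = Some ord_max).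

Lemma del_maxE x : x != cc -> T x = omap (lift ord_max) (del_max T x).
Proof.
case/is_syt_gridP: T_syt => T_dom T_inj _ _ x_cc; rewrite ffunE.
case Tx: (T x) => [u|] //=; case: unliftP => [v ->|u_max] //.
suff : x = cc by move/eqP; rewrite (negbTE x_cc).
by apply: T_inj; rewrite ?inE ?T_dom ?Tx ?T_cc ?u_max.
Qed.

Lemma del_maxK : add_max (del_max T) = T.
Proof.
apply/ffunP => x; rewrite [LHS]ffunE.
by have [->|x_cc] := eqVneq x cc; [rewrite T_cc | rewrite -del_maxE].
Qed.

Lemma syt_del_max : is_syt_grid (shape_dec r i) (del_max T).
Proof.
case/is_syt_gridP: T_syt => T_dom T_inj T_row T_col.
have lifted x : in_shape (shape_dec r i) (cell_val x) ->
    in_shape r (cell_val x) /\ T x = omap (lift ord_max) (del_max T x).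
  by rewrite in_shape_dec => /andP[hx x_cc]; split; last exact: del_maxE.
apply/is_syt_gridP; split.
- move=> x; rewrite in_shape_dec; have [->|x_cc] := eqVneq x cc.
    by rewrite andbF ffunE T_cc /= unlift_none.
  by rewrite andbT T_dom (del_maxE x_cc); case: (del_max T x).
- move=> x y; rewrite !inE => /lifted[hx Tx] /lifted[hy Ty] e.
  by apply: T_inj; rewrite ?inE // Tx Ty e.
- move=> x y /lifted[hx Tx] /lifted[hy Ty] e lt.
  by rewrite -label_lt_lift -Tx -Ty; apply: T_row.
- move=> x y /lifted[hx Tx] /lifted[hy Ty] e lt.
  by rewrite -label_lt_lift -Tx -Ty; apply: T_col.
Qed.

End DelMax.

Lemma card_syt_max_at m :
  #|[set T : {ffun cell -> option 'I_m.+1} | is_syt_grid r T & T cc == Some ord_max]|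
  = nsyt_grid (shape_dec r i) m.
Proof.
have add_max_inj : {in [set T | is_syt_grid (shape_dec r i) T] &, injective (@add_max m)}.
  move=> T1 T2; rewrite !inE => T1_syt T2_syt /(congr1 (@del_max m)).
  by rewrite !add_maxK.
rewrite /nsyt_grid -(card_in_imset add_max_inj); apply: eq_card => T.
rewrite !inE; apply/andP/imsetP => [[T_syt /eqP T_cc]|[T' + ->]].
  by exists (del_max T); rewrite ?inE ?syt_del_max ?del_maxK.
by rewrite inE => T'_syt; split; [exact: syt_add_max | rewrite add_max_cc].
Qed.

End Corner.

Lemma card_syt_max_row m i : #|shape_cells r| = m.+1 ->
  #|[set T : {ffun cell -> option 'I_m.+1} | is_syt_grid r T & max_row T == i]|
  = if is_corner r i then nsyt_grid (shape_dec r i) m else 0.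
Proof.
move=> card_r; case: ifP => [i_corner | not_corner].
  have [cc ccE] := corner_cell_exists i_corner.
  rewrite -(card_syt_max_at i_corner ccE); apply: eq_card => T; rewrite !inE.
  apply: andb_id2l => T_syt; have [x Tx] := max_label_exists card_r T_syt.
  rewrite (max_rowE T_syt Tx); apply/eqP/eqP => [x1 | T_cc].
    suff <- : x = cc by [].
    have [x2 _] := max_label_corner T_syt Tx.
    by apply: cell_val_inj; rewrite ccE /cell_val x2 x1.
  by rewrite -(max_rowE T_syt Tx) (max_rowE T_syt T_cc); case: ccE.
apply/eqP; rewrite cards_eq0; apply/eqP/setP => T; rewrite !inE.
apply/negbTE/andP => -[T_syt /eqP row_i]; have [x Tx] := max_label_exists card_r T_syt.
have [_] := max_label_corner T_syt Tx.
by rewrite -(max_rowE T_syt Tx) row_i not_corner.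
Qed.

Lemma nsyt_grid_branch m : #|shape_cells r| = m.+1 ->
  nsyt_grid r m.+1 = \sum_(i < R) (if is_corner r i then nsyt_grid (shape_dec r i) m else 0).
Proof.
move=> card_r; under eq_bigr => i _ do rewrite -(card_syt_max_row i card_r).
rewrite /nsyt_grid -sum1_card.
under eq_bigr => T.
  rewrite inE => T_syt; have [x Tx] := max_label_exists card_r T_syt.
  rewrite -(sum_ord_eq 1%N (ltn_ord x.1)) -(max_rowE T_syt Tx).
  over.
rewrite exchange_big; apply: eq_bigr => i _.
by rewrite -big_mkcondr sum1dep_card; apply: eq_card => T; rewrite !inE eq_sym.
Qed.

End Shape.
End GridTableaux.

Lemma num_syt_grid la :
  num_syt la = nsyt_grid (size la) (head 0 la) (nth 0 la) (sumn la).
Proof. by []. Qed.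

Lemma is_cornerE R (r : nat -> nat) i :
  (forall j k, j <= k -> r k <= r j) -> (forall k, R <= k -> r k = 0) ->
  is_corner R r i = (r i.+1 < r i).
Proof.
move=> r_noninc r_rows; apply/andP/idP => [[ri_gt0 /forallP later] | lt].
  case: (ltnP i.+1 R) => [iR | Ri]; last by rewrite r_rows.
  by have := later (Ordinal iR); rewrite /= ltnSn.
split; first exact: leq_ltn_trans lt.
by apply/forallP => k; apply/implyP => ik; apply: leq_ltn_trans lt; apply: r_noninc.
Qed.

Lemma nsyt_grid_empty R C (r : nat -> nat) : (forall i, r i = 0) -> nsyt_grid R C r 0 = 1.
Proof.
move=> r0; rewrite /nsyt_grid -(cards1 ([ffun=> None] : {ffun 'I_R * 'I_C -> option 'I_0})).
apply: eq_card => T.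
have -> : T = [ffun=> None] by apply/ffunP => x; rewrite ffunE; case: (T x) => // -[].
rewrite !inE eqxx; apply/is_syt_gridP; split=> [x|x y|x y|x y]; rewrite ?inE /in_shape r0 //.
by rewrite ffunE.
Qed.

Lemma card_shape_cells R C (r : nat -> nat) :
  (forall i, r i <= C) -> #|shape_cells R C r| = \sum_(i < R) r i.
Proof.
move=> r_cols; transitivity (\sum_(i < R) \sum_(j < C | j < r i) 1).
  by rewrite pair_big_dep -sum1_card; apply: eq_bigl => x; rewrite inE.
by apply: eq_bigr => i _; rewrite -(big_ord_widen _ (fun=> 1)) // sum1_card card_ord.
Qed.

Lemma sum_nth_ord R (s : seq nat) : size s <= R -> \sum_(i < R) nth 0 s i = sumn s.
Proof.
move=> size_s; rewrite sumnE (big_nth 0) big_mkord (big_ord_widen (n1 := size s) R) //.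
by rewrite [RHS]big_mkcond; apply: eq_bigr => i _; case: ltnP => // /(nth_default 0) ->.
Qed.

Lemma card_shape_cells_seq R C (s : seq nat) : size s <= R -> (forall i, nth 0 s i <= C) ->
  #|shape_cells R C (nth 0 s)| = sumn s.
Proof. by move=> size_s s_cols; rewrite card_shape_cells // sum_nth_ord. Qed.

Definition hook_rows a b : nat -> nat := fun i => if i == 0 then a else if i <= b then 1 else 0.

Definition lam_rows a b c d : nat -> nat := fun i =>
  if i == 0 then a else if i == 1 then c.+1 else if i <= d.+1 then 2 else if i <= b then 1 else 0.

Ltac rows_lia := rewrite /shape_dec /hook_rows /lam_rows /=; repeat (case: ifP => ?); lia.

Lemma hook_rowsE a b : nth 0 (a :: nseq b 1) = hook_rows a b.
Proof.
apply: functional_extensionality => -[|i] //=.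
by rewrite nth_nseq /hook_rows /=; case: ltnP.
Qed.

Lemma lam_rowsE a b c d : d < b -> nth 0 (lam_abcd a b c d) = lam_rows a b c d.
Proof.
move=> d_lt; apply: functional_extensionality => -[|[|i]] //=.
rewrite nth_cat size_nseq !nth_nseq; rows_lia.
Qed.

Local Open Scope ring_scope.

Lemma hook_corner_term (V : nmodType) (F : (nat -> nat) -> V) R a b i :
  (0 < a)%N -> (b < R)%N ->
  (if is_corner R (hook_rows a b) i then F (shape_dec (hook_rows a b) i) else 0) =
    (if i == 0%N then (if (1 < a)%N || (b == 0%N) then F (hook_rows a.-1 b) else 0) else 0)
  + (if i == b then (if (0 < b)%N then F (hook_rows a b.-1) else 0) else 0).
Proof.
move=> a_gt0 b_lt; rewrite is_cornerE => [|j k jk|k Rk]; try rows_lia.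
have -> : (hook_rows a b i.+1 < hook_rows a b i)%N =
    ((i == 0%N) && ((1 < a)%N || (b == 0%N))) || ((i == b) && (0 < b)%N) by rows_lia.
repeat (case: ifP => ?); rewrite ?add0r ?addr0 //; try (exfalso; lia);
  congr F; apply: functional_extensionality => k; rows_lia.
Qed.

Lemma nsyt_hook R C a b : (b < R)%N -> (a <= C)%N -> (0 < a)%N || (b == 0%N) ->
  nsyt_grid R C (hook_rows a b) (a + b) = 'C((a + b).-1, b).
Proof.
move e: (a + b)%N => n; elim: n a b e => [|n IH] a b e b_lt a_le ab.
  have [-> ->] : a = 0%N /\ b = 0%N by lia.
  by rewrite nsyt_grid_empty // => i; rows_lia.
have card_hook : #|shape_cells R C (hook_rows a b)| = n.+1.
  rewrite -hook_rowsE card_shape_cells_seq /= ?size_nseq ?sumn_nseq ?hook_rowsE //; first lia.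
  by move=> i; rows_lia.
rewrite nsyt_grid_branch // => [|i|i]; try rows_lia.
have a_gt0 : (0 < a)%N by lia.
under eq_bigr => i _ do rewrite (hook_corner_term (fun s => nsyt_grid R C s n) _ a_gt0 b_lt).
rewrite big_split /= !sum_ord_eq; [| lia ..].
have -> : (if (1 < a)%N || (b == 0%N) then nsyt_grid R C (hook_rows a.-1 b) n else 0)
    = (if (1 < a)%N || (b == 0%N) then 'C(n.-1, b) else 0).
  by case: ifP => // a_gt1; apply: IH; lia.
have -> : (if (0 < b)%N then nsyt_grid R C (hook_rows a b.-1) n else 0)
    = (if (0 < b)%N then 'C(n.-1, b.-1) else 0).
  by case: ifP => // b_gt0; apply: IH; lia.
case: (posnP b) => [b0 | b_gt0]; first by rewrite b0 orbT !bin0.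
rewrite orbF; case: (ltnP 1 a) => a_gt1 /=.
  have [n' n_eq] : exists n', n = n'.+1 by exists n.-1; lia.
  by rewrite n_eq -(prednK b_gt0) binS.
have n_b : n = b by lia.
by rewrite n_b !binn.
Qed.

Lemma lam_corner_term (V : nmodType) (F : (nat -> nat) -> V) R a b c d i :
  (0 < c)%N -> (c < a)%N -> (d < b)%N -> (b < R)%N ->
  (if is_corner R (lam_rows a b c d) i then F (shape_dec (lam_rows a b c d) i) else 0) =
    (if i == 0%N then (if (c.+1 < a)%N then F (lam_rows a.-1 b c d) else 0) else 0)
  + (if i == 1%N then
       (if (1 < c)%N then F (lam_rows a b c.-1 d) else if d == 0%N then F (hook_rows a b) else 0)
     else 0)
  + (if i == d.+1 then (if (0 < d)%N then F (lam_rows a b c d.-1) else 0) else 0)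
  + (if i == b then (if (d.+1 < b)%N then F (lam_rows a b.-1 c d) else 0) else 0).
Proof.
move=> c_gt0 c_lt d_lt b_lt; rewrite is_cornerE => [|j k jk|k Rk]; try rows_lia.
have -> : (lam_rows a b c d i.+1 < lam_rows a b c d i)%N =
    [|| (i == 0%N) && (c.+1 < a)%N, (i == 1%N) && ((1 < c)%N || (d == 0%N)),
        (i == d.+1) && (0 < d)%N | (i == b) && (d.+1 < b)%N] by rows_lia.
repeat (case: ifP => ?); rewrite ?add0r ?addr0 //; try (exfalso; lia);
  congr F; apply: functional_extensionality => k; rows_lia.
Qed.

Definition syt_formula (a b c d : nat) : rat :=
  multinom4 (a + b + c + d) a b c d *
    ((a * c * (a - c) * (b - d))%N%:R /
     ((a + b)%N%:R * (a + d)%N%:R * (b + c)%N%:R * (c + d)%N%:R)).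

Lemma syt_formula_eq0 a b c d :
  [|| c == 0%N, (a <= c)%N | (b <= d)%N] -> syt_formula a b c d = 0.
Proof.
move=> vanish; rewrite /syt_formula (_ : (a * c * (a - c) * (b - d))%N = 0%N) ?mul0r ?mulr0 //.
by case/or3P: vanish => [/eqP -> | /eqP -> | /eqP ->]; rewrite ?muln0 ?mul0n.
Qed.

Lemma binomial_ratE n k : (k <= n)%N -> 'C(n, k)%:R = n`!%:R / (k`!%:R * (n - k)`!%:R) :> rat.
Proof.
move=> k_le; rewrite -(bin_fact k_le) !natrM; field.
by rewrite !pnatr_eq0 -!lt0n !fact_gt0.
Qed.

Lemma syt_formula_ratE a b c d : (c <= a)%N -> (d <= b)%N ->
  syt_formula a b c d =
    (a + b + c + d)`!%:R / (a`!%:R * b`!%:R * c`!%:R * d`!%:R) *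
    (a%:R * c%:R * (a%:R - c%:R) * (b%:R - d%:R) /
     ((a%:R + b%:R) * (a%:R + d%:R) * (b%:R + c%:R) * (c%:R + d%:R))).
Proof. by move=> c_le d_le; rewrite /syt_formula /multinom4 !natrM !natrD !natrB. Qed.

Ltac field_side := rewrite ?pnatr_eq0 -?lt0n ?fact_gt0 /=;
  repeat (apply/andP; split); first [apply: lt0r_neq0; lra | lia].

Ltac expand_factorials := rewrite !(addSn, addnS, addn0) !factS !natrM -!nat1r !natrD.

Lemma syt_formula_branch a b c d : (0 < c)%N -> (c < a)%N -> (d < b)%N ->
  syt_formula a b c d =
    syt_formula a.-1 b c d
  + (if (1 < c)%N then syt_formula a b c.-1 d
     else if d == 0%N then 'C((a + b).-1, b)%:R else 0)
  + (if (0 < d)%N then syt_formula a b c d.-1 else 0)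
  + syt_formula a b.-1 c d.
Proof.
move=> c_gt0 c_lt d_lt.
have -> : (if (1 < c)%N then syt_formula a b c.-1 d
           else if d == 0%N then 'C((a + b).-1, b)%:R else 0)
        = syt_formula a b c.-1 d
          + if (c == 1%N) && (d == 0%N) then 'C(a + b - 1, b)%:R else 0.
  rewrite subn1; case: ltnP => c_gt1.
    have -> : (c == 1%N) = false by lia.
    by rewrite addr0.
  have -> : c = 1%N by lia.
  by rewrite /= (@syt_formula_eq0 a b 0 d) ?add0r.
have [a' a_eq] : exists a', a = a'.+1 by exists a.-1; lia.
have [b' b_eq] : exists b', b = b'.+1 by exists b.-1; lia.
have [c' c_eq] : exists c', c = c'.+1 by exists c.-1; lia.
subst a b c => /=.
have a_ge0 := ler0n rat a'; have b_ge0 := ler0n rat b'; have c_ge0 := ler0n rat c'.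
case: d d_lt => [|d] d_lt /=; last first.
  have d_ge0 := ler0n rat d.
  rewrite andbF addr0 !syt_formula_ratE; [| lia ..].
  by expand_factorials; field; field_side.
rewrite addr0 /=.
case: c' c_gt0 c_lt c_ge0 => [|c] _ c_lt c_ge0 /=; last first.
  have c_ge0' := ler0n rat c.
  rewrite addr0 !syt_formula_ratE; [| lia ..].
  by expand_factorials; field; field_side.
rewrite (@syt_formula_eq0 a'.+1 b'.+1 0 0) // add0r binomial_ratE; last by lia.
have -> : (a'.+1 + b'.+1 - 1 - b'.+1 = a')%N by lia.
have -> : (a'.+1 + b'.+1 - 1 = (a' + b').+1)%N by lia.
rewrite !syt_formula_ratE; [| lia ..].
by expand_factorials; field; field_side.
Qed.

Lemma size_lam_abcd a b c d : (d < b)%N -> size (lam_abcd a b c d) = b.+1.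
Proof. by move=> d_lt; rewrite /lam_abcd /= size_cat !size_nseq; lia. Qed.

Lemma sumn_lam_abcd a b c d : (d < b)%N -> sumn (lam_abcd a b c d) = (a + b + c + d)%N.
Proof. by move=> d_lt; rewrite /lam_abcd /= sumn_cat !sumn_nseq; lia. Qed.

Lemma nsyt_lam R C a b c d : (0 < c)%N -> (c < a)%N -> (d < b)%N -> (b < R)%N -> (a <= C)%N ->
  (nsyt_grid R C (lam_rows a b c d) (a + b + c + d))%:R = syt_formula a b c d.
Proof.
move e: (a + b + c + d)%N => n.
elim: n a b c d e => [|n IH] a b c d e c_gt0 c_lt d_lt b_lt a_le; first lia.
have card_lam : #|shape_cells R C (lam_rows a b c d)| = n.+1.
  rewrite -lam_rowsE // card_shape_cells_seq ?size_lam_abcd ?sumn_lam_abcd //.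
  by move=> i; rewrite lam_rowsE //; rows_lia.
rewrite nsyt_grid_branch // => [|i|i]; try rows_lia.
rewrite natr_sum.
under eq_bigr => i _ do rewrite (fun_if (fun k => k%:R : rat)) mulr0n
  (lam_corner_term (fun s => (nsyt_grid R C s n)%:R) _ c_gt0 c_lt d_lt b_lt).
rewrite !big_split /= !sum_ord_eq; [| lia ..].
rewrite syt_formula_branch //; congr (_ + _ + _ + _).
- by case: ifP => c_lt'; [apply: IH; lia | rewrite syt_formula_eq0 //; lia].
- case: ifP => [c_gt1 | c_le1]; first by apply: IH; lia.
  case: ifP => // /eqP d0; rewrite (_ : n = a + b)%N ?nsyt_hook //; lia.
- by case: ifP => // d_gt0; apply: IH; lia.
- by case: ifP => b_lt'; [apply: IH; lia | rewrite syt_formula_eq0 //; lia].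
Qed.

Definition rho_sum_from (k : nat) (s : seq nat) : rat :=
  \sum_(i < size s) (nth 0 s i)%:R * ((nth 0 s i)%:R - 2 * (k + i).+1%:R + 1).

Lemma rho_sum_from_cons k x s :
  rho_sum_from k (x :: s) = x%:R * (x%:R - 2 * k.+1%:R + 1) + rho_sum_from k.+1 s.
Proof.
rewrite /rho_sum_from /= big_ord_recl /= addn0; congr (_ + _).
by apply: eq_bigr => i _; rewrite /= addSnnS.
Qed.

Lemma rho_sum_from_cat k s1 s2 :
  rho_sum_from k (s1 ++ s2) = rho_sum_from k s1 + rho_sum_from (k + size s1) s2.
Proof.
elim: s1 k => [|x s1 IH] k /=; first by rewrite /rho_sum_from big_ord0 add0r addn0.
by rewrite !rho_sum_from_cons IH addrA addSnnS.
Qed.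

Lemma rho_sum_from_nseq k n x : rho_sum_from k (nseq n x) =
  n%:R * x%:R * (x%:R + 1) - 2 * x%:R * k%:R * n%:R - x%:R * n%:R * (n%:R + 1).
Proof.
elim: n k => [|n IH] k /=; first by rewrite /rho_sum_from big_ord0 !mulr0 !mul0r subr0.
by rewrite rho_sum_from_cons IH -!nat1r; ring.
Qed.

Lemma bin2_ratE n : 'C(n, 2)%:R = n%:R * (n%:R - 1) / 2 :> rat.
Proof.
elim: n => [|n IH]; first by rewrite bin0n mul0r.
by rewrite binS bin1 natrD IH -nat1r; field.
Qed.

Lemma rho_lam_abcd a b c d : (d < b)%N ->
  rho (lam_abcd a b c d) = 'C(a, 2)%:R - 'C(b.+1, 2)%:R + 'C(c, 2)%:R - 'C(d.+1, 2)%:R.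
Proof.
move=> d_lt; rewrite [rho _](_ : _ = rho_sum_from 0 (lam_abcd a b c d) / 2) //.
rewrite /lam_abcd /= !rho_sum_from_cons rho_sum_from_cat !rho_sum_from_nseq size_nseq.
have b_eq : b = ((b - d - 1) + d + 1)%N by lia.
move: (b - d - 1)%N b_eq => e ->; rewrite !bin2_ratE -!nat1r !natrD; ring.
Qed.

Theorem mainTheorem14 (a b c d n : nat) :
  (1 <= c)%N -> (c < a)%N -> (d < b)%N -> (a + b + c + d)%N = n ->
  (num_syt (lam_abcd a b c d))%:R =
    multinom4 n a b c d *
    ((a * c * (a - c) * (b - d))%N%:R /
     ((a + b)%N%:R * (a + d)%N%:R * (b + c)%N%:R * (c + d)%N%:R))
  /\
  rho (lam_abcd a b c d) =
    ('C(a, 2))%:R - ('C(b.+1, 2))%:R + ('C(c, 2))%:R - ('C(d.+1, 2))%:R.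
Proof.
move=> c_gt0 c_lt d_lt <-; split; last exact: rho_lam_abcd.
rewrite num_syt_grid sumn_lam_abcd // lam_rowsE //.
by apply: nsyt_lam; rewrite ?size_lam_abcd.
Qed.
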